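(* Let $K$ be a field, $X$ a finite connected poset, $m$ a positive integer, and $I\subseteq J_m$ an ideal of $I(X,K)$ such that $\dim_K\big(I/(I\cap J_{m+1})\big)=1$. Then there exists a unique $e_{xy}\in J_m\setminus J_{m+1}$ such that every $f\in I\setminus J_{m+1}$ is of the form $f=f(x,y)e_{xy}+j_{xy}$ with $j_{xy}\in J_{m+1}$.
   Context: $I(X,K)$ is the incidence algebra: functions $f:X\times X\to K$ with $f(x,y)=0$ unless $x\le y$, product $(fg)(x,y)=\sum_{x\le t\le y}f(x,t)g(t,y)$; $e_{xy}$ ($x\le y$) is the function equal to $1$ at $(x,y)$ and $0$ elsewhere. $[f,g]=fg-gf$; $J_1=\mathrm{span}_K\{[f,g]: f,g\in I(X,K)\}$ and $J_k=\mathrm{span}_K\{[f,g]: f\in J_1, g\in J_{k-1}\}$ for $k\ge2$ (one has $J_k=\mathrm{span}_K\{e_{xy}: l(\lfloor x,y\rfloor)\ge k\}$, where $l(\lfloor x,y\rfloor)$ is the maximal length of a chain in $\{z:x\le z\le y\}$). Connected means any two elements are joined by a sequence in which consecutive elements are in a covering relation. *)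

From HB Require Import structures.
From mathcomp Require Import all_boot all_order all_algebra.
Set Implicit Arguments. Unset Strict Implicit. Unset Printing Implicit Defensive.
Import Order.TTheory GRing.Theory.
Local Open Scope ring_scope.

Section Incidence.
Variables (K : fieldType) (d : Order.disp_t) (X : finPOrderType d).

Definition ifun := X -> X -> K.

Definition incidence (f : ifun) : Prop :=
  forall x y, ~~ (x <= y)%O -> f x y = 0.

Definition imul (f g : ifun) : ifun :=
  fun x y => \sum_(t | (x <= t)%O && (t <= y)%O) f x t * g t y.

Definition icomm (f g : ifun) : ifun :=
  fun x y => imul f g x y - imul g f x y.

Definition eunit (x y : X) : ifun :=
  fun a b => if (a == x) && (b == y) then 1 else 0.

Definition span (P : ifun -> Prop) (f : ifun) : Prop :=
  exists (n : nat) (c : 'I_n -> K) (g : 'I_n -> ifun),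
    (forall i, P (g i)) /\ forall x y, f x y = \sum_(i < n) c i * g i x y.

Definition J1 : ifun -> Prop :=
  span (fun h => exists f g, [/\ incidence f, incidence g &
                                 forall x y, h x y = icomm f g x y]).

(* J_0 := I(X,K) (convention), J_1 as above,
   J_k = span {[f,g] : f in J_1, g in J_(k-1)} for k >= 2 *)
Fixpoint J (k : nat) : ifun -> Prop :=
  match k with
  | 0 => incidence
  | 1 => J1
  | S k' => span (fun h => exists f g, [/\ J1 f, J k' g &
                                         forall x y, h x y = icomm f g x y])
  end.

Definition is_ideal (I : ifun -> Prop) : Prop :=
  [/\ (forall f, I f -> incidence f),
      I (fun _ _ => 0),
      (forall f g, I f -> I g -> I (fun x y => f x y + g x y)),
      (forall (c : K) f, I f -> I (fun x y => c * f x y)) &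
      (forall f g, incidence f -> I g -> I (imul f g) /\ I (imul g f))].

(* dim_K (I / (I ∩ L)) = 1, for subspaces I, L: the quotient has a basis
   consisting of the single class of some f0 in I \ L. *)
Definition quot_dim1 (I L : ifun -> Prop) : Prop :=
  exists f0, [/\ I f0, ~ L f0 &
    forall f, I f -> exists c : K, L (fun x y => f x y - c * f0 x y)].

Definition covers (x y : X) : bool :=
  (x < y)%O && [forall z : X, ~~ ((x < z)%O && (z < y)%O)].

Definition poset_connected : Prop :=
  forall x y : X, connect (fun a b => covers a b || covers b a) x y.

Definition good_unit (I : ifun -> Prop) (m : nat) (x y : X) : Prop :=
  [/\ (x <= y)%O, J m (eunit x y), ~ J m.+1 (eunit x y) &
      forall f, I f -> ~ J m.+1 f ->
        exists j, J m.+1 j /\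
          forall a b, f a b = f x y * eunit x y a b + j a b].

End Incidence.

From Pilot Require Import Defs.
From mathcomp Require Import all_boot all_order all_algebra.
Set Implicit Arguments. Unset Strict Implicit. Unset Printing Implicit Defensive.
Import Order.TTheory GRing.Theory.
Local Open Scope ring_scope.

(* J_k consists exactly of the functions vanishing at every pair (x, y) with
   l(⌊x,y⌋) < k: an e_xy with a chain x < z < ... below y is an iterated
   commutator [e_xz, e_zy], while a product f g only reaches pairs whose length
   is at least the sum of the lengths reached by f and g.  Let f0 span I modulo
   J_{m+1} and pick (x, y) with l(⌊x,y⌋) = m and f0(x, y) <> 0.  For f in I and
   any other pair (a, b) with l(⌊a,b⌋) <= m, e_aa f e_bb = f(a, b) e_ab lies in
   I, so it equals c f0 modulo J_{m+1}; evaluating at (x, y) gives c = 0, and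
   then evaluating at (a, b) gives f(a, b) = 0.  Hence f = f(x, y) e_xy modulo
   J_{m+1}. *)

Section Filtration.
Variables (K : fieldType) (d : Order.disp_t) (X : finPOrderType d).

Implicit Types (f g : ifun K X) (x y z : X).

(* [chain_ge k x y] holds iff [x < z_1 < ... < z_k <= y] for some [z_i],
   i.e. [x <= y] and l(⌊x,y⌋) >= k. *)
Fixpoint chain_ge (k : nat) x y : bool :=
  if k is k'.+1 then [exists z, (x < z)%O && chain_ge k' z y] else (x <= y)%O.

Lemma chain_ge_le k x y : chain_ge k x y -> (x <= y)%O.
Proof.
elim: k x => [//|k IH] x /existsP [z /andP [xz /IH zy]].
exact: le_trans (ltW xz) zy.
Qed.

Lemma chain_ge1 x y : chain_ge 1 x y = (x < y)%O.
Proof.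
apply/existsP/idP => [[z /andP [xz zy]]|xy]; first exact: lt_le_trans xz zy.
by exists y; rewrite xy lexx.
Qed.

Lemma le_chain_ge k x z y : (x <= z)%O -> chain_ge k z y -> chain_ge k x y.
Proof.
case: k => [|k] /= xz; first exact: le_trans.
case/existsP=> t /andP [zt ty]; apply/existsP; exists t.
by rewrite (le_lt_trans xz zt).
Qed.

Lemma chain_geD k l x z y :
  chain_ge k x z -> chain_ge l z y -> chain_ge (k + l) x y.
Proof.
elim: k x => [|k IH] x /=; first exact: le_chain_ge.
case/existsP=> t /andP [xt tz] zy; apply/existsP; exists t.
by rewrite xt (IH _ tz zy).
Qed.

(* The functions in span {e_xy : l(⌊x,y⌋) >= k}; [incidence f] is convertibly
   [supported_ge 0 f]. *)
Definition supported_ge (k : nat) f : Prop :=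
  forall x y, ~~ chain_ge k x y -> f x y = 0.

Lemma supported_ge_imul k l f g :
  supported_ge k f -> supported_ge l g -> supported_ge (k + l) (imul f g).
Proof.
move=> fk gl x y nxy; rewrite /imul big1 // => t _.
have [xt|/fk ->] := boolP (chain_ge k x t); last by rewrite mul0r.
by rewrite gl ?mulr0 //; apply: contra nxy; exact: chain_geD xt.
Qed.

Lemma supported_ge_icomm k l f g :
  supported_ge k f -> supported_ge l g -> supported_ge (k + l) (icomm f g).
Proof.
move=> fk gl x y nxy.
by rewrite /icomm (supported_ge_imul fk gl) ?(supported_ge_imul gl fk) ?subr0 // addnC.
Qed.

Lemma imul_diag f g x : imul f g x x = f x x * g x x.
Proof.
rewrite /imul (eq_bigl (pred1 x)) ?big_pred1_eq // => t /=.
by rewrite eq_sym eq_le.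
Qed.

Lemma supported_ge1_icomm f g :
  incidence f -> incidence g -> supported_ge 1 (icomm f g).
Proof.
move=> finc ginc x y; rewrite chain_ge1.
have [<- _|neq nxy] := eqVneq x y; first by rewrite /icomm !imul_diag mulrC subrr.
by apply: (@supported_ge_icomm 0 0 f g finc ginc); rewrite /= le_eqVlt negb_or neq.
Qed.

Lemma supported_ge_span k (P : ifun K X -> Prop) f :
  (forall g, P g -> supported_ge k g) -> Defs.span P f -> supported_ge k f.
Proof.
move=> Pk [n [c [g [Pg fE]]]] x y nxy.
by rewrite fE big1 // => i _; rewrite (Pk _ (Pg i)) ?mulr0.
Qed.

Definition commutators (A B : ifun K X -> Prop) h : Prop :=
  exists f g, [/\ A f, B g & forall x y, h x y = icomm f g x y].

Definition Jgens (k : nat) : ifun K X -> Prop :=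
  if k is k'.+1 then commutators (@J1 K d X) (J k'.+1)
  else commutators (@incidence K d X) (@incidence K d X).

Lemma J_succE k : J k.+1 = Defs.span (Jgens k).
Proof. by case: k. Qed.

Lemma J1_supported f : J1 f -> supported_ge 1 f.
Proof.
apply: supported_ge_span => h [f1 [g1 [f10 g10 hE]]] x y nxy.
by rewrite hE supported_ge1_icomm.
Qed.

Lemma J_supported k f : J k f -> supported_ge k f.
Proof.
elim: k f => [//|k IH] f; rewrite J_succE; apply: supported_ge_span.
case: k IH => [|k] IH h [f1 [g1 [f1J g1J hE]]] x y nxy; rewrite hE.
  exact: supported_ge1_icomm.
exact: (supported_ge_icomm (J1_supported f1J) (IH _ g1J)).
Qed.

Lemma eunitxx x y : eunit K x y x y = 1.
Proof. by rewrite /eunit !eqxx. Qed.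

Lemma eunit_off x y a b : (a, b) != (x, y) -> eunit K x y a b = 0.
Proof. by rewrite /eunit xpair_eqE => /negbTE ->. Qed.

Lemma supported_ge_eunit k x y : chain_ge k x y -> supported_ge k (eunit K x y).
Proof.
move=> xy a b nab; rewrite eunit_off //.
by apply: contraNneq nab => -[-> ->].
Qed.

Lemma eunit_incidence x y : (x <= y)%O -> incidence (eunit K x y).
Proof. exact: (@supported_ge_eunit 0). Qed.

Lemma imul_eunitl x z g a b :
  imul (eunit K x z) g a b =
  if (a == x) && (a <= z <= b)%O then g z b else 0.
Proof.
rewrite /imul big_mkcond (bigD1 z) //= big1 => [|t /negbTE tz]; last first.
  by rewrite /eunit tz andbF mul0r if_same.
rewrite /eunit eqxx andbT addr0.
by case: (a == x); case: (_ && _); rewrite ?mul1r ?mul0r.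
Qed.

Lemma imul_eunitr z y f a b :
  imul f (eunit K z y) a b =
  if (b == y) && (a <= z <= b)%O then f a z else 0.
Proof.
rewrite /imul big_mkcond (bigD1 z) //= big1 => [|t /negbTE tz]; last first.
  by rewrite /eunit tz mulr0 if_same.
rewrite /eunit eqxx addr0.
by case: (b == y); case: (_ && _); rewrite ?mulr1 ?mulr0.
Qed.

Lemma eunit_icomm x z y a b : (x < z)%O -> (z <= y)%O ->
  eunit K x y a b = icomm (eunit K x z) (eunit K z y) a b.
Proof.
move=> xz zy; rewrite /icomm !imul_eunitl.
have yx : (y == x) = false by rewrite gt_eqF // (lt_le_trans xz zy).
rewrite [eunit K x z y b]/eunit yx if_same subr0 /eunit.
have [->|] //= := eqVneq a x.
rewrite (ltW xz) eqxx /=.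
by case: (b =P y) => [->|]; [rewrite zy | case: (z <= b)%O].
Qed.

Lemma imul_eunit_corner f a b p q : incidence f ->
  imul (eunit K a a) (imul f (eunit K b b)) p q = f a b * eunit K a b p q.
Proof.
move=> finc; rewrite imul_eunitl imul_eunitr /eunit.
have [->|_] /= := eqVneq p a; last by rewrite mulr0.
case: (q =P b) => [->|_] /=; last by rewrite mulr0 if_same.
by rewrite !lexx /= andbT mulr1; case: ifPn => [-> //|/finc ->].
Qed.

Lemma span_mem (P : ifun K X -> Prop) g : P g -> Defs.span P g.
Proof.
by move=> Pg; exists 1%N, (fun=> 1), (fun=> g); split=> // x y; rewrite big_ord1 mul1r.
Qed.

Lemma span_eunit (P : ifun K X -> Prop) f :
  (forall x y, f x y != 0 -> P (eunit K x y)) -> Defs.span P f.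
Proof.
move=> Pe; pose A := [pred p : X * X | f p.1 p.2 != 0].
exists #|A|, (fun i => f (enum_val i).1 (enum_val i).2),
  (fun i => eunit K (enum_val i).1 (enum_val i).2); split.
  by move=> i; apply: Pe; have := enum_valP i.
move=> x y; rewrite -(big_enum_val (fun p => f p.1 p.2 * eunit K p.1 p.2 x y)) /=.
have [xyA|xyNA] := boolP ((x, y) \in A).
  rewrite (bigD1 (x, y)) //= eunitxx mulr1 big1 ?addr0 // => -[a b] /andP [_ ne].
  by rewrite eunit_off ?mulr0 // eq_sym.
rewrite big1 => [|[a b] abA]; first by move: xyNA; rewrite inE negbK => /eqP.
by rewrite eunit_off ?mulr0 //; apply: contraNneq xyNA => ->.
Qed.

Lemma J1_eunit x y : (x < y)%O -> J1 (eunit K x y).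
Proof.
move=> xy; apply: span_mem; exists (eunit K x y), (eunit K y y); split.
- exact: eunit_incidence (ltW xy).
- exact: eunit_incidence (lexx y).
- by move=> a b; apply: eunit_icomm xy (lexx y).
Qed.

Lemma Jgens_eunit k x y : chain_ge k.+1 x y -> Jgens k (eunit K x y).
Proof.
elim: k x y => [|k IH] x y /existsP [z /andP [xz zy]];
  exists (eunit K x z), (eunit K z y); split.
- exact: eunit_incidence (ltW xz).
- exact: eunit_incidence zy.
- by move=> a b; apply: eunit_icomm xz zy.
- exact: J1_eunit.
- by rewrite J_succE; apply/span_mem/IH.
- by move=> a b; apply: eunit_icomm xz (@chain_ge_le k.+1 _ _ zy).
Qed.

Lemma supported_J k f : supported_ge k f -> J k f.
Proof.
case: k => [//|k] fk; rewrite J_succE; apply: span_eunit => x y fxy.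
by apply: Jgens_eunit; apply: contraNT fxy => /fk ->; rewrite eqxx.
Qed.

Lemma notJ_witness k f :
  ~ J k f -> exists x y, f x y != 0 /\ ~~ chain_ge k x y.
Proof.
move=> fNJ; have [/existsP [x /existsP [y /andP xy]]|none] :=
  boolP [exists x, exists y, (f x y != 0) && ~~ chain_ge k x y]; first by exists x, y.
case: fNJ; apply: supported_J => x y nxy; apply/eqP.
by move/existsPn: none => /(_ x)/existsPn/(_ y); rewrite nxy andbT negbK.
Qed.

End Filtration.

Section OneDimensionalQuotient.
Variables (K : fieldType) (d : Order.disp_t) (X : finPOrderType d).
Variables (m : nat) (I : ifun K X -> Prop) (f0 : ifun K X) (x y : X).
Hypothesis I_incidence : forall f, I f -> incidence f.
Hypothesis I_imul : forall f g, incidence f -> I g -> I (imul f g) /\ I (imul g f).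
Hypothesis f0_spans : forall f, I f -> exists c : K, J m.+1 (fun a b => f a b - c * f0 a b).
Hypothesis f0xy : f0 x y != 0.
Hypothesis xy_shallow : ~~ chain_ge m.+1 x y.

Lemma ideal_multiple_f0 f : I f ->
  exists c, forall a b, ~~ chain_ge m.+1 a b -> f a b = c * f0 a b.
Proof.
move=> If; have [c /J_supported fc] := f0_spans If.
by exists c => a b nab; apply/eqP; rewrite -subr_eq0 fc.
Qed.

Lemma ideal_vanish_shallow f a b :
  I f -> ~~ chain_ge m.+1 a b -> (a, b) != (x, y) -> f a b = 0.
Proof.
move=> If nab abxy.
have [_ Ifb] := I_imul (eunit_incidence K (lexx b)) If.
have [Ig _] := I_imul (eunit_incidence K (lexx a)) Ifb.
have [c gc] := ideal_multiple_f0 Ig.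
have gE p q : imul (eunit K a a) (imul f (eunit K b b)) p q = f a b * eunit K a b p q.
  exact: imul_eunit_corner (I_incidence If).
have c0 : c = 0.
  move: (gc x y xy_shallow); rewrite gE eunit_off 1?eq_sym // mulr0.
  by move/esym/eqP; rewrite mulf_eq0 (negbTE f0xy) orbF => /eqP.
by move: (gc a b nab); rewrite gE eunitxx mulr1 c0 mul0r.
Qed.

Lemma ideal_decomp f : I f -> J m.+1 (fun a b => f a b - f x y * eunit K x y a b).
Proof.
move=> If; apply: supported_J => a b nab.
have [[-> ->]|abxy] := eqVneq (a, b) (x, y); first by rewrite eunitxx mulr1 subrr.
by rewrite ideal_vanish_shallow // eunit_off // mulr0 subr0.
Qed.

Hypothesis I_J : forall f, I f -> J m f.
Hypothesis I_f0 : I f0.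
Hypothesis f0_notJ : ~ J m.+1 f0.

Lemma good_unit_xy : good_unit I m x y.
Proof.
have xy_deep : chain_ge m x y.
  by apply: contraNT f0xy => /(J_supported (I_J I_f0)) ->; rewrite eqxx.
split.
- exact: chain_ge_le xy_deep.
- exact/supported_J/supported_ge_eunit.
- by move/J_supported/(_ x y xy_shallow)/eqP; rewrite eunitxx oner_eq0.
- move=> f If _; exists (fun a b => f a b - f x y * eunit K x y a b).
  by split=> [|a b]; [exact: ideal_decomp | rewrite addrC subrK].
Qed.

Lemma good_unit_unique x' y' : good_unit I m x' y' -> x' = x /\ y' = y.
Proof.
case=> _ _ _ /(_ f0 I_f0 f0_notJ) [j [/J_supported j0 f0E]].
move: (f0E x y); rewrite j0 // addr0.
have [[-> ->] //|xy'] := eqVneq (x', y') (x, y).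
by rewrite eunit_off 1?eq_sym // mulr0 => /eqP; rewrite (negbTE f0xy).
Qed.

End OneDimensionalQuotient.

Theorem proposition3p6 (K : fieldType) (d : Order.disp_t) (X : finPOrderType d)
    (m : nat) (I : ifun K X -> Prop) :
  poset_connected X -> (0 < m)%N -> is_ideal I ->
  (forall f, I f -> J m f) ->
  quot_dim1 I (J m.+1) ->
  exists x y, good_unit I m x y /\
    (forall x' y', good_unit I m x' y' -> x' = x /\ y' = y).
Proof.
move=> _ _ [I_incidence _ _ _ I_imul] I_J [f0 [I_f0 f0_notJ f0_spans]].
have [x [y [f0xy xy_shallow]]] := notJ_witness f0_notJ.
exists x, y; split; first exact: (good_unit_xy I_incidence I_imul f0_spans).
exact: good_unit_unique f0xy xy_shallow I_f0 f0_notJ.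
Qed.
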